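(* Let $\mathcal{H}_X,\mathcal{H}_Z,\mathcal{H}_A$ be finite-dimensional Hilbert spaces with $d_A=\dim\mathcal{H}_A$, and let $\mathcal{S}:\mathrm{CPTP}(\mathcal{H}_X,\mathcal{H}_Z\otimes\mathcal{H}_A)\to\mathrm{CPTP}(\mathcal{H}_X,\mathcal{H}_Z)$ be the partial-trace supermap $\mathcal{S}(\mathcal{N})=\mathrm{Tr}_A\circ\mathcal{N}$. Let $\Gamma\in\mathrm{CPTP}(\mathcal{H}_X,\mathcal{H}_Z\otimes\mathcal{H}_A)$ be such that the Choi operators $C_\Gamma$ and $C_{\mathcal{S}(\Gamma)}$ are full-rank (invertible). Let $\mathcal{R}:\mathrm{CPTP}(\mathcal{H}_X,\mathcal{H}_Z)\to\mathrm{CPTP}(\mathcal{H}_{X_{\rm r}},\mathcal{H}_{Z_{\rm r}}\otimes\mathcal{H}_{A_{\rm r}})$ be a superchannel, where $X_{\rm r},Z_{\rm r},A_{\rm r}$ are copies of $X,Z,A$, and suppose $\mathcal{R}(\mathcal{S}(\Gamma))=\Gamma$. Then there exist a finite-dimensional Hilbert space $\mathcal{H}_R$ with $d_R:=\dim\mathcal{H}_R\geq d_A$ and an operator $V:\mathcal{H}_X\otimes\mathcal{H}_Z\otimes\mathcal{H}_R\to\mathcal{H}_{X_{\rm r}}\otimes\mathcal{H}_{Z_{\rm r}}\otimes\mathcal{H}_{A_{\rm r}}$ with $VV^\dagger=\mathbb{1}_{X_{\rm r}Z_{\rm r}A_{\rm r}}$ (i.e. $V^\dagger$ is an isometry) such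 that for every operator $\tau$ on $\mathcal{H}_X\otimes\mathcal{H}_Z$, $$\mathcal{C}_{\mathcal{R}}(\tau)=C_\Gamma^{1/2}\,V\left(C_{\mathcal{S}(\Gamma)}^{-1/2}\,\tau\,C_{\mathcal{S}(\Gamma)}^{-1/2}\otimes\mathbb{1}_R\right)V^\dagger\,C_\Gamma^{1/2},$$ where $C_\Gamma^{1/2}$ is regarded as an operator on $\mathcal{H}_{X_{\rm r}}\otimes\mathcal{H}_{Z_{\rm r}}\otimes\mathcal{H}_{A_{\rm r}}$. Furthermore, if the rank of $\mathcal{R}$ equals $d_A$, then $d_R=d_A$ and $V$ is unitary.
   Context: $\mathrm{CPTP}(\mathcal{H},\mathcal{K})$ denotes the set of quantum channels (completely positive trace-preserving maps) from operators on $\mathcal{H}$ to operators on $\mathcal{K}$. The Choi operator of a linear map $\mathcal{N}$ from operators on $\mathcal{H}_{\rm in}$ (with orthonormal basis $\{|i\rangle\}$) to operators on $\mathcal{H}_{\rm out}$ is $C_{\mathcal{N}}=\sum_{i,j}|i\rangle\langle j|\otimes\mathcal{N}(|i\rangle\langle j|)$, an operator on $\mathcal{H}_{\rm in}\otimes\mathcal{H}_{\rm out}$. A superchannel (deterministic supermap) is a linear map on linear maps sending channels to channels that can be realized as $\mathcal{N}\mapsto\mathcal{E}_{\rm post}\circ(\mathcal{N}\otimes\mathcal{I}_M)\circ\mathcal{E}_{\rm pre}$ for some ancilla system $M$ and channels $\mathcal{E}_{\rm pre},\mathcal{E}_{\rm post}$; equivalently it induces a completely positive linear map $\mathcal{C}_{\mathcal{R}}$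 on Choi operators defined by $\mathcal{C}_{\mathcal{R}}(C_{\mathcal{N}})=C_{\mathcal{R}(\mathcal{N})}$ (extended linearly to all operators on $\mathcal{H}_X\otimes\mathcal{H}_Z$). The rank of a supermap $\mathcal{R}$ is the rank of its Choi operator, which equals the Kraus rank of $\mathcal{C}_{\mathcal{R}}$. *)

(* Complex scalars: an arbitrary numClosedFieldType C
   (e.g. algC or complex R); finite-dimensional Hilbert spaces are C^d. *)
From HB Require Import structures.
From mathcomp Require Import all_boot all_order all_algebra.
From mathcomp Require Export sesquilinear spectral.
Set Implicit Arguments. Unset Strict Implicit. Unset Printing Implicit Defensive.
Import Order.TTheory GRing.Theory Num.Theory.
Local Open Scope ring_scope.
Local Open Scope sesquilinear_scope.

Section QDefs.
Variable C : numClosedFieldType.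

(* Tensor (Kronecker) product; the basis vector |i> (x) |k> of C^m (x) C^p
   is indexed by mxvec_index i k : 'I_(m * p). *)
Definition kron m n p q (A : 'M[C]_(m, n)) (B : 'M[C]_(p, q)) : 'M[C]_(m * p, n * q) :=
  \sum_(i < m) \sum_(j < n) \sum_(k < p) \sum_(l < q)
     (A i j * B k l) *: delta_mx (mxvec_index i k) (mxvec_index j l).

Definition block m p (M : 'M[C]_(m * p)) (i j : 'I_m) : 'M[C]_p :=
  \matrix_(k, l) M (mxvec_index i k) (mxvec_index j l).

Definition ptr2 m p (M : 'M[C]_(m * p)) : 'M[C]_m :=
  \matrix_(i, j) \sum_(k < p) M (mxvec_index i k) (mxvec_index j k).

Definition psd n (A : 'M[C]_n) : Prop :=
  A ^t* = A /\ forall v : 'cV[C]_n, 0 <= (v ^t* *m A *m v) 0 0.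

(* linear maps between operator spaces are represented by functions *)
Definition linmap m n (f : 'M[C]_m -> 'M[C]_n) : Prop :=
  forall (a : C) (x y : 'M[C]_m), f (a *: x + y) = a *: f x + f y.

Definition tens_id m n p (f : 'M[C]_m -> 'M[C]_n) (M : 'M[C]_(m * p)) : 'M[C]_(n * p) :=
  \sum_(i < m) \sum_(j < m) kron (f (delta_mx i j)) (block M i j).

Definition CPTP m n (f : 'M[C]_m -> 'M[C]_n) : Prop :=
  [/\ linmap f,
      (forall (p : nat) (M : 'M[C]_(m * p)), psd M -> psd (tens_id f M))
    & forall M : 'M[C]_m, \tr (f M) = \tr M].

Definition choi m n (f : 'M[C]_m -> 'M[C]_n) : 'M[C]_(m * n) :=
  \sum_(i < m) \sum_(j < m) kron (delta_mx i j) (f (delta_mx i j)).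

Definition choi_inv m n (T : 'M[C]_(m * n)) : 'M[C]_m -> 'M[C]_n :=
  fun rho => \sum_(i < m) \sum_(j < m) rho i j *: block T i j.

(* superchannels from maps X -> Z to maps Xr -> Zr (x) Ar
   (dims of Xr, Zr, Ar equal those of X, Z, A):
   R N = E_post o (N (x) id_M) o E_pre on all linear maps N *)
Definition superchannel dX dZ dA
    (R : ('M[C]_dX -> 'M[C]_dZ) -> ('M[C]_dX -> 'M[C]_(dZ * dA))) : Prop :=
  exists (dM : nat) (pre : 'M[C]_dX -> 'M[C]_(dX * dM))
         (post : 'M[C]_(dZ * dM) -> 'M[C]_(dZ * dA)),
    [/\ CPTP pre, CPTP post &
        forall N : 'M[C]_dX -> 'M[C]_dZ, linmap N ->
          R N = fun rho => post (tens_id N (pre rho))].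

(* the induced map on Choi operators, C_R(C_N) = C_{R(N)} *)
Definition choi_super dX dZ dA
    (R : ('M[C]_dX -> 'M[C]_dZ) -> ('M[C]_dX -> 'M[C]_(dZ * dA)))
    (T : 'M[C]_(dX * dZ)) : 'M[C]_(dX * (dZ * dA)) :=
  choi (R (choi_inv T)).

Definition super_rank dX dZ dA
    (R : ('M[C]_dX -> 'M[C]_dZ) -> ('M[C]_dX -> 'M[C]_(dZ * dA))) : nat :=
  \rank (choi (choi_super R)).

Definition ptr_super dX dZ dA (N : 'M[C]_dX -> 'M[C]_(dZ * dA)) : 'M[C]_dX -> 'M[C]_dZ :=
  fun rho => ptr2 (N rho).

End QDefs.

From HB Require Import structures.
From mathcomp Require Import all_boot all_order all_algebra.
From mathcomp Require Import sesquilinear spectral.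
Import Order.TTheory GRing.Theory Num.Theory.
Local Open Scope ring_scope.
Local Open Scope sesquilinear_scope.
Set Implicit Arguments. Unset Strict Implicit. Unset Printing Implicit Defensive.

(* A superchannel acts as N |-> post o (N (x) id) o pre, so the map C_R it
   induces on Choi operators is completely positive: up to a permutation of tensor
   factors, its Choi operator is (post (x) id) applied to a weighted reindexing of
   (pre (x) id)(Omega), Omega the unnormalised maximally entangled operator, hence it
   is positive semidefinite.  Writing it as X X^dag with X of width
   d_R = max(d_A, rank R) gives a Kraus form C_R(tau) = K (tau (x) 1_R) K^dag.  The
   hypothesis R(S(Gamma)) = Gamma reads C_R(Q^2) = P^2 for the square roots
   P = C_Gamma^(1/2), Q = C_S(Gamma)^(1/2), so V = P^-1 K (Q (x) 1_R) satisfies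
   V V^dag = P^-1 C_R(Q^2) P^-1 = 1, and the formula for C_R follows by substituting
   K = P V (Q^-1 (x) 1_R).  If rank R = d_A then d_R = d_A, V is square, and its right
   inverse V^dag is also a left inverse. *)

Section MxvecIndex.
Variables m n : nat.

Definition mxvec_unindex (k : 'I_(m * n)) : 'I_m * 'I_n :=
  enum_val (cast_ord (esym (mxvec_cast m n)) k).

Lemma mxvec_indexK (i : 'I_m) (j : 'I_n) : mxvec_unindex (mxvec_index i j) = (i, j).
Proof. by rewrite /mxvec_unindex cast_ordK enum_rankK. Qed.

Lemma eq_mxvec_index (i i' : 'I_m) (j j' : 'I_n) :
  (mxvec_index i j == mxvec_index i' j') = (i == i') && (j == j').
Proof.
apply/eqP/andP => [E|[/eqP-> /eqP->]] //.
by have := mxvec_indexK i j; rewrite E mxvec_indexK => -[-> ->].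
Qed.

Lemma big_mxvec_index (V : nmodType) (F : 'I_(m * n) -> V) :
  \sum_k F k = \sum_i \sum_j F (mxvec_index i j).
Proof.
rewrite pair_big (reindex (uncurry (@mxvec_index m n))) /=.
  by apply: eq_bigr => -[i j].
by apply: subon_bij (curry_mxvec_bij m n).
Qed.
End MxvecIndex.

Lemma mulmx1C_eqdim (R : comUnitRingType) m n (A : 'M[R]_(m, n)) (B : 'M[R]_(n, m)) :
  m = n -> A *m B = 1%:M -> B *m A = 1%:M.
Proof. by move=> mn; subst n; apply: mulmx1C. Qed.

Section Operators.
Variable C : numClosedFieldType.

Lemma delta_mxC m n (i a : 'I_m) (j b : 'I_n) :
  delta_mx i j a b = delta_mx a b i j :> C.
Proof. by rewrite !mxE [a == _]eq_sym [b == _]eq_sym. Qed.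

Lemma sum_delta_mx m n (F : 'I_m -> 'I_n -> C) i j :
  \sum_(a < m) \sum_(b < n) delta_mx a b i j * F a b = F i j.
Proof.
rewrite (bigD1 i) //= [X in _ + X]big1 => [|a ai]; last first.
  by rewrite big1 // => b _; rewrite mxE eq_sym (negPf ai) mul0r.
rewrite addr0 (bigD1 j) //= big1 => [|b bj]; last first.
  by rewrite mxE eq_sym (negPf bj) andbF mul0r.
by rewrite mxE !eqxx mul1r addr0.
Qed.

Lemma delta_mx_mxvec_index m n p q
    (i i' : 'I_m) (j j' : 'I_n) (k k' : 'I_p) (l l' : 'I_q) :
  delta_mx (mxvec_index i k) (mxvec_index j l) (mxvec_index i' k') (mxvec_index j' l')
  = delta_mx i j i' j' * delta_mx k l k' l' :> C.
Proof. by rewrite !mxE !eq_mxvec_index -natrM mulnb andbACA. Qed.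

Lemma kronE m n p q (A : 'M[C]_(m, n)) (B : 'M[C]_(p, q)) i j k l :
  kron A B (mxvec_index i k) (mxvec_index j l) = A i j * B k l.
Proof.
suff -> : kron A B = \matrix_(I, J) (A (mxvec_unindex I).1 (mxvec_unindex J).1 *
                                      B (mxvec_unindex I).2 (mxvec_unindex J).2).
  by rewrite mxE !mxvec_indexK.
rewrite [RHS]matrix_sum_delta big_mxvec_index; apply: eq_bigr => i' _.
rewrite exchange_big; apply: eq_bigr => k' _.
rewrite big_mxvec_index; apply: eq_bigr => j' _; apply: eq_bigr => l' _.
by rewrite mxE !mxvec_indexK.
Qed.

Lemma kron_mul m n p m' n' p' (A : 'M[C]_(m, n)) (A' : 'M[C]_(n, p))
    (B : 'M[C]_(m', n')) (B' : 'M[C]_(n', p')) :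
  kron A B *m kron A' B' = kron (A *m A') (B *m B').
Proof.
apply/matrixP => I J; case/mxvec_indexP: I => i k; case/mxvec_indexP: J => j l.
rewrite kronE !mxE big_distrlr big_mxvec_index; apply: eq_bigr => a _.
by apply: eq_bigr => c _; rewrite !kronE mulrACA.
Qed.

Lemma trmxC_mul m n p (A : 'M[C]_(m, n)) (B : 'M[C]_(n, p)) :
  (A *m B) ^t* = B ^t* *m A ^t*.
Proof. by rewrite trmx_mul map_mxM. Qed.

Lemma trmxC_kron m n p q (A : 'M[C]_(m, n)) (B : 'M[C]_(p, q)) :
  (kron A B) ^t* = kron (A ^t*) (B ^t*).
Proof.
apply/matrixP => I J; case/mxvec_indexP: I => j l; case/mxvec_indexP: J => i k.
by rewrite !mxE !kronE !mxE rmorphM.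
Qed.

Lemma choiE m n (f : 'M[C]_m -> 'M[C]_n) i j k l :
  choi f (mxvec_index i k) (mxvec_index j l) = f (delta_mx i j) k l.
Proof.
rewrite -[RHS](sum_delta_mx (fun a b => f (delta_mx a b) k l)) summxE.
by apply: eq_bigr => a _; rewrite summxE; apply: eq_bigr => b _; rewrite kronE.
Qed.

Lemma tens_idE m n p (f : 'M[C]_m -> 'M[C]_n) (M : 'M[C]_(m * p)) i j k l :
  tens_id f M (mxvec_index i k) (mxvec_index j l) =
  \sum_(c < m) \sum_(d < m) f (delta_mx c d) i j * M (mxvec_index c k) (mxvec_index d l).
Proof.
rewrite summxE; apply: eq_bigr => c _; rewrite summxE.
by apply: eq_bigr => d _; rewrite kronE mxE.
Qed.

Lemma choi_inv_delta m n (T : 'M[C]_(m * n)) i j :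
  choi_inv T (delta_mx i j) = block T i j.
Proof.
apply/matrixP => k l; rewrite -[RHS](sum_delta_mx (fun a b => block T a b k l)) summxE.
apply: eq_bigr => a _; rewrite summxE; apply: eq_bigr => b _.
by rewrite delta_mxC !mxE.
Qed.

Lemma block_choi m n (f : 'M[C]_m -> 'M[C]_n) i j : block (choi f) i j = f (delta_mx i j).
Proof. by apply/matrixP => k l; rewrite mxE choiE. Qed.

Lemma tens_id_choi_invE m n p (T : 'M[C]_(m * n)) (M : 'M[C]_(m * p)) i j k l :
  tens_id (choi_inv T) M (mxvec_index i k) (mxvec_index j l) =
  \sum_(c < m) \sum_(d < m)
    T (mxvec_index c i) (mxvec_index d j) * M (mxvec_index c k) (mxvec_index d l).
Proof.
rewrite tens_idE; apply: eq_bigr => c _; apply: eq_bigr => d _.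
by rewrite choi_inv_delta mxE.
Qed.

Lemma tens_id_choi_inv_linear m n p a (x y : 'M[C]_(m * n)) (M : 'M[C]_(m * p)) :
  tens_id (choi_inv (a *: x + y)) M =
  a *: tens_id (choi_inv x) M + tens_id (choi_inv y) M.
Proof.
apply/matrixP => I J; case/mxvec_indexP: I => i k; case/mxvec_indexP: J => j l.
rewrite !mxE !tens_id_choi_invE mulr_sumr -big_split; apply: eq_bigr => c _.
by rewrite mulr_sumr -big_split; apply: eq_bigr => d _; rewrite !mxE mulrDl mulrA.
Qed.

Lemma linmap0 m n (f : 'M[C]_m -> 'M[C]_n) : linmap f -> f 0 = 0.
Proof.
move=> lf; have := lf 1 0 0; rewrite !scale1r addr0 => f0.
by apply/(addrI (f 0)); rewrite addr0 -f0.
Qed.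

Lemma linmapD m n (f : 'M[C]_m -> 'M[C]_n) : linmap f -> {morph f : x y / x + y}.
Proof. by move=> lf x y; have := lf 1 x y; rewrite !scale1r. Qed.

Lemma linmapZ m n (f : 'M[C]_m -> 'M[C]_n) : linmap f -> forall a x, f (a *: x) = a *: f x.
Proof. by move=> lf a x; have := lf a x 0; rewrite !addr0 linmap0 // addr0. Qed.

Lemma linmap_sum_delta m n (f : 'M[C]_m -> 'M[C]_n) (W : 'M[C]_m) : linmap f ->
  f W = \sum_(a < m) \sum_(b < m) W a b *: f (delta_mx a b).
Proof.
move=> lf; rewrite {1}(matrix_sum_delta W) (big_morph f (linmapD lf) (linmap0 lf)).
apply: eq_bigr => a _; rewrite (big_morph f (linmapD lf) (linmap0 lf)).
by apply: eq_bigr => b _; rewrite linmapZ.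
Qed.

Lemma linmap_choi_inv m n (T : 'M[C]_(m * n)) : linmap (choi_inv T).
Proof.
move=> a x y; rewrite /choi_inv scaler_sumr -big_split; apply: eq_bigr => i _.
rewrite scaler_sumr -big_split; apply: eq_bigr => j _.
by rewrite !mxE scalerDl scalerA.
Qed.

Lemma linmap_ptr_super dX dZ dA (N : 'M[C]_dX -> 'M[C]_(dZ * dA)) :
  linmap N -> linmap (ptr_super N).
Proof.
move=> lN a x y; apply/matrixP => i j.
rewrite /ptr_super (lN a x y) !mxE mulr_sumr -big_split.
by apply: eq_bigr => k _; rewrite !mxE.
Qed.

End Operators.

Section Positivity.
Variable C : numClosedFieldType.

Lemma psd_conj m n (S : 'M[C]_(m, n)) (M : 'M[C]_n) : psd M -> psd (S *m M *m S ^t*).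
Proof.
case=> hM pM; split; first by rewrite !trmxC_mul trmxCK hM mulmxA.
by move=> v; have := pM (S ^t* *m v); rewrite trmxC_mul trmxCK !mulmxA.
Qed.

Lemma psd_outer n (w : 'cV[C]_n) : psd (w *m w ^t*).
Proof.
have psd1 : psd (1%:M : 'M[C]_1).
  split=> [|v]; first by rewrite trmx1 map_mx1.
  by rewrite mulmx1 !mxE big_ord1 !mxE mulrC mul_conjC_ge0.
by have := psd_conj w psd1; rewrite mulmx1.
Qed.

Lemma psd_reindex m n (c : 'I_m -> C) (f : 'I_m -> 'I_n) (M : 'M[C]_n) :
  psd M -> psd (\matrix_(i, j) (c i * M (f i) (f j) * (c j)^*)).
Proof.
pose S : 'M[C]_(m, n) := \matrix_(i, k) (c i * (f i == k)%:R).
suff -> : \matrix_(i, j) (c i * M (f i) (f j) * (c j)^*) = S *m M *m S ^t*.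
  exact: psd_conj.
apply/matrixP => i j; rewrite !mxE (bigD1 (f j)) //= big1 => [|l lj]; last first.
  by rewrite !mxE eq_sym (negPf lj) mulr0 rmorph0 mulr0.
rewrite !mxE eqxx mulr1 addr0 (bigD1 (f i)) //= big1 => [|k ki].
  by rewrite !mxE eqxx mulr1 addr0.
by rewrite !mxE eq_sym (negPf ki) mulr0 mul0r.
Qed.

Lemma psd_mxsub m n (f : 'I_m -> 'I_n) (M : 'M[C]_n) : psd M -> psd (mxsub f f M).
Proof.
move=> /(psd_reindex (fun=> 1) f); congr psd; apply/matrixP => i j.
by rewrite !mxE rmorph1 mul1r mulr1.
Qed.

Lemma psd_tens_id m n p (f : 'M[C]_m -> 'M[C]_n) (M : 'M[C]_(m * p)) :
  CPTP f -> psd M -> psd (tens_id f M).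
Proof. by case=> _ + _; apply. Qed.

Definition max_entangled n : 'M[C]_(n * n) :=
  (mxvec (1%:M : 'M[C]_n))^T *m ((mxvec (1%:M : 'M[C]_n))^T) ^t*.

Lemma max_entangledE n (c d x y : 'I_n) :
  max_entangled n (mxvec_index c x) (mxvec_index d y) = delta_mx c d x y.
Proof.
rewrite mxE big_ord1 !mxE !mxvecE !mxE rmorph_nat -natrM mulnb.
by rewrite [x == _]eq_sym [y == _]eq_sym.
Qed.

End Positivity.

Arguments max_entangled {C} n.

Section Factorization.
Variable C : numClosedFieldType.

Lemma mxrank_mul_trmxC m n (A : 'M[C]_(m, n)) : \rank (A *m A ^t*) = \rank A.
Proof.
apply/eqP; rewrite eqn_leq mxrankM_maxl /=.
have kerS : (kermx (A *m A ^t*) <= kermx A)%MS.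
  apply/row_subP => i; set w := row i _.
  have /sub_kermxP wAA : (w <= kermx (A *m A ^t*))%MS by apply: row_sub.
  apply/sub_kermxP; set u := w *m A.
  have uu : dotmx u u = 0.
    by rewrite dotmxE /u trmxC_mul !mulmxA -(mulmxA w) wAA mul0mx mxE.
  by have [//|/dotmx_is_dotmx] := eqVneq u 0; rewrite uu ltxx.
by have := mxrankS kerS; rewrite !mxrank_ker leq_sub2lE // rank_leq_row.
Qed.

Lemma psd_sqrt_factor n (J : 'M[C]_n) : psd J -> exists B : 'M[C]_n, B *m B ^t* = J.
Proof.
move=> psdJ; have [hJ _] := psdJ.
have nJ : J \is normalmx.
  by apply: hermitian_normalmx; rewrite is_hermitianmxE expr0 scale1r hJ.
set U := spectralmx J; set d := spectral_diag J.
have UUt : U *m U ^t* = 1%:M by apply/unitarymxP/spectral_unitarymx.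
have EJ : J = U ^t* *m diag_mx d *m U.
  by rewrite -invmx_unitary ?spectral_unitarymx //; apply/orthomx_spectralP.
have UJU : U *m J *m U ^t* = diag_mx d.
  by rewrite EJ !mulmxA UUt mul1mx -mulmxA UUt mulmx1.
have d_ge0 k : 0 <= d 0 k.
  have [_ /(_ (delta_mx k 0))] := psd_conj U psdJ; rewrite UJU mul_mx_diag !mxE.
  rewrite (bigD1 k) //= big1 => [|j jk]; last by rewrite !mxE (negPf jk) mulr0.
  by rewrite !mxE eqxx /= rmorph1 mul1r mulr1 addr0.
pose s : 'rV[C]_n := \row_k sqrtC (d 0 k).
have sC : (diag_mx s) ^t* = diag_mx s.
  rewrite tr_diag_mx map_diag_mx; congr diag_mx; apply/rowP => k.
  by rewrite !mxE; apply: conj_Creal; rewrite ger0_real // sqrtC_ge0.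
have ss : diag_mx s *m diag_mx s = diag_mx d.
  by rewrite mulmx_diag; congr diag_mx; apply/rowP => k; rewrite !mxE -expr2 sqrtCK.
exists (U ^t* *m diag_mx s).
by rewrite trmxC_mul trmxCK sC !mulmxA -(mulmxA (U ^t*)) ss -EJ.
Qed.

Lemma gram_rank_factor m n (B : 'M[C]_(m, n)) :
  exists X : 'M[C]_(m, \rank B), X *m X ^t* = B *m B ^t*.
Proof.
pose S := schmidt (row_base B).
have SSt : S *m S ^t* = 1%:M.
  by apply/unitarymxP/schmidt_unitarymx; apply: rank_leq_col.
have /submxP [D EB] : (B <= S)%MS.
  by rewrite (eqmx_schmidt_free (row_base_free B)) eq_row_base.
have BSS : B *m S ^t* *m S = B.
  have DSS : D *m S *m S ^t* *m S = D *m S by rewrite -(mulmxA D) SSt mulmx1.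
  by rewrite -EB in DSS.
by exists (B *m S ^t*); rewrite trmxC_mul trmxCK mulmxA BSS.
Qed.

Lemma psd_factor n d (J : 'M[C]_n) :
  psd J -> (\rank J <= d)%N -> exists X : 'M[C]_(n, d), X *m X ^t* = J.
Proof.
move=> /psd_sqrt_factor [B <-]; rewrite mxrank_mul_trmxC => rank_le.
have [X <-] := gram_rank_factor B.
exists (X *m pid_mx (\rank B)).
rewrite trmxC_mul tr_pid_mx map_pid_mx mulmxA -(mulmxA X) mul_pid_mx minnn.
by rewrite (minn_idPr rank_le) pid_mx_1 mulmx1.
Qed.

End Factorization.

Section Kraus.
Variable C : numClosedFieldType.

Lemma choi_factor_kraus n N r (Phi : 'M[C]_n -> 'M[C]_N) (B : 'M[C]_(n * N, r)) :
  linmap Phi -> B *m B ^t* = choi Phi ->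
  exists K : 'M[C]_(N, n * r),
    forall tau, Phi tau = K *m kron tau (1%:M : 'M[C]_r) *m K ^t*.
Proof.
move=> lPhi BB.
pose K : 'M[C]_(N, n * r) := \matrix_i mxvec (\matrix_(a, l) B (mxvec_index a i) l).
have KE i a l : K i (mxvec_index a l) = B (mxvec_index a i) l by rewrite mxE mxvecE mxE.
exists K => tau; apply/matrixP => i j.
have K_kronE b l : (K *m kron tau 1%:M) i (mxvec_index b l) =
    \sum_(a < n) B (mxvec_index a i) l * tau a b.
  rewrite mxE big_mxvec_index; apply: eq_bigr => a _.
  rewrite (bigD1 l) //= big1 => [|l' l'l]; last by rewrite kronE !mxE (negPf l'l) !mulr0.
  by rewrite kronE KE !mxE eqxx mulr1 addr0.
rewrite (linmap_sum_delta _ lPhi) summxE; under eq_bigr do rewrite summxE.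
rewrite exchange_big [RHS]mxE big_mxvec_index; apply: eq_bigr => b _.
under [RHS]eq_bigr do rewrite K_kronE mulr_suml.
rewrite exchange_big; apply: eq_bigr => a _.
rewrite mxE -(choiE Phi) -BB mxE mulr_sumr; apply: eq_bigr => l _.
by rewrite !mxE mxvecE mxE mulrCA mulrA.
Qed.

Lemma kraus_normalize n N r (Phi : 'M[C]_n -> 'M[C]_N) (K : 'M[C]_(N, n * r))
    (P : 'M[C]_N) (Q : 'M[C]_n) :
  (forall tau, Phi tau = K *m kron tau (1%:M : 'M[C]_r) *m K ^t*) ->
  P ^t* = P -> Q ^t* = Q -> P \in unitmx -> Q \in unitmx -> Phi (Q *m Q) = P *m P ->
  exists V : 'M[C]_(N, n * r), V *m V ^t* = 1%:M /\
    forall tau, Phi tau = P *m V *m kron (invmx Q *m tau *m invmx Q) 1%:M *m V ^t* *m P.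
Proof.
move=> PhiE hP hQ uP uQ PhiQQ.
pose V := invmx P *m K *m kron Q (1%:M : 'M[C]_r).
have VtE : V ^t* = kron Q 1%:M *m K ^t* *m invmx P.
  by rewrite !trmxC_mul trmxC_kron hQ trmx1 map_mx1 trmx_inv map_invmx hP mulmxA.
exists V; split.
  have -> : V *m V ^t* =
      invmx P *m (K *m (kron Q 1%:M *m kron Q 1%:M) *m K ^t*) *m invmx P.
    by rewrite VtE /V !mulmxA.
  by rewrite kron_mul mulmx1 -PhiE PhiQQ mulmxA mulVmx // mul1mx mulmxV.
move=> tau; have kronQK : kron Q (1%:M : 'M[C]_r) *m
    kron (invmx Q *m tau *m invmx Q) 1%:M *m kron Q 1%:M = kron tau 1%:M.
  by rewrite !kron_mul !mulmx1 !mulmxA mulmxV // mul1mx -mulmxA mulVmx // mulmx1.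
rewrite PhiE VtE /V -kronQK !mulmxA mulmxV // mul1mx.
by rewrite -(mulmxA _ (invmx P) P) mulVmx // mulmx1.
Qed.

End Kraus.

Section Superchannel.
Variable C : numClosedFieldType.
Variables dX dZ dA dM : nat.
Variable pre : 'M[C]_dX -> 'M[C]_(dX * dM).
Variable post : 'M[C]_(dZ * dM) -> 'M[C]_(dZ * dA).
Variable R : ('M[C]_dX -> 'M[C]_dZ) -> ('M[C]_dX -> 'M[C]_(dZ * dA)).
Hypothesis pre_CPTP : CPTP pre.
Hypothesis post_CPTP : CPTP post.
Hypothesis RE : forall N : 'M[C]_dX -> 'M[C]_dZ, linmap N ->
  R N = fun rho => post (tens_id N (pre rho)).

Lemma choi_superE T i j k l :
  choi_super R T (mxvec_index i k) (mxvec_index j l) =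
  post (tens_id (choi_inv T) (pre (delta_mx i j))) k l.
Proof. by rewrite /choi_super choiE RE //; apply: linmap_choi_inv. Qed.

Lemma linmap_choi_super : linmap (choi_super R).
Proof.
have lpost : linmap post by case: post_CPTP.
move=> a x y; apply/matrixP => I J.
case/mxvec_indexP: I => i k; case/mxvec_indexP: J => j l.
by rewrite !mxE !choi_superE tens_id_choi_inv_linear lpost !mxE.
Qed.

Lemma choi_super_choi N : linmap N -> choi_super R (choi N) = choi (R N).
Proof.
move=> lN; rewrite /choi_super (RE (linmap_choi_inv _)) (RE lN).
apply: eq_bigr => i _; apply: eq_bigr => j _; congr (kron _ (post _)).
apply: eq_bigr => c _; apply: eq_bigr => d _.
by rewrite choi_inv_delta block_choi.
Qed.

Definition pre_state : 'M[C]_((dX * dM) * dX) := tens_id pre (max_entangled dX).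

Lemma pre_stateE al be x y :
  pre_state (mxvec_index al x) (mxvec_index be y) = pre (delta_mx x y) al be.
Proof.
rewrite tens_idE -(sum_delta_mx (fun c d => pre (delta_mx c d) al be) x y).
by apply: eq_bigr => c _; apply: eq_bigr => d _; rewrite max_entangledE mulrC.
Qed.

(* mid_state at ((z, m), ((a1, a2), x)), ((z', m'), ((b1, b2), y)) is
   [z = a2] [z' = b2] pre(|x><y|)_((a1, m), (b1, m')). *)
Definition mid_weight (I : 'I_((dZ * dM) * ((dX * dZ) * dX))) : C :=
  let: (zm, ax) := mxvec_unindex I in
  let: (a, _) := mxvec_unindex ax in
  ((mxvec_unindex zm).1 == (mxvec_unindex a).2)%:R.

Definition mid_index (I : 'I_((dZ * dM) * ((dX * dZ) * dX))) : 'I_((dX * dM) * dX) :=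
  let: (zm, ax) := mxvec_unindex I in
  let: (a, x) := mxvec_unindex ax in
  mxvec_index (mxvec_index (mxvec_unindex a).1 (mxvec_unindex zm).2) x.

Definition mid_state : 'M[C]_((dZ * dM) * ((dX * dZ) * dX)) :=
  \matrix_(I, J) (mid_weight I * pre_state (mid_index I) (mid_index J) * (mid_weight J)^*).

Lemma mid_stateE g h a b x y :
  mid_state (mxvec_index g (mxvec_index a x)) (mxvec_index h (mxvec_index b y)) =
  tens_id (choi_inv (delta_mx a b)) (pre (delta_mx x y)) g h.
Proof.
case/mxvec_indexP: g => z m; case/mxvec_indexP: h => z' m'.
case/mxvec_indexP: a => a1 a2; case/mxvec_indexP: b => b1 b2.
rewrite tens_id_choi_invE mxE /mid_weight /mid_index !mxvec_indexK /= pre_stateE.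
under eq_bigr do under eq_bigr do rewrite delta_mx_mxvec_index delta_mxC -mulrA.
by rewrite sum_delta_mx !mxE rmorph_nat mulrAC -natrM mulnb.
Qed.

Definition out_state : 'M[C]_((dZ * dA) * ((dX * dZ) * dX)) := tens_id post mid_state.

Definition out_index (I : 'I_((dX * dZ) * (dX * (dZ * dA)))) :
    'I_((dZ * dA) * ((dX * dZ) * dX)) :=
  let: (a, xr) := mxvec_unindex I in
  let: (x, r) := mxvec_unindex xr in
  mxvec_index r (mxvec_index a x).

Lemma choi_choi_super : choi (choi_super R) = mxsub out_index out_index out_state.
Proof.
have lpost : linmap post by case: post_CPTP.
apply/matrixP => I J.
case/mxvec_indexP: I => a xr; case/mxvec_indexP: xr => x r.
case/mxvec_indexP: J => b ys; case/mxvec_indexP: ys => y s.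
rewrite choiE choi_superE mxE /out_index !mxvec_indexK /= tens_idE.
rewrite (linmap_sum_delta _ lpost) summxE; apply: eq_bigr => g _.
by rewrite summxE; apply: eq_bigr => h _; rewrite mxE mid_stateE mulrC.
Qed.

Lemma psd_choi_choi_super : psd (choi (choi_super R)).
Proof.
rewrite choi_choi_super; apply/psd_mxsub/psd_tens_id => //.
apply/psd_reindex/psd_tens_id => //; exact: psd_outer.
Qed.

End Superchannel.

Theorem lemma2 (C : numClosedFieldType) (dX dZ dA : nat)
  (Gamma : 'M[C]_dX -> 'M[C]_(dZ * dA))
  (R : ('M[C]_dX -> 'M[C]_dZ) -> ('M[C]_dX -> 'M[C]_(dZ * dA)))
  (P : 'M[C]_(dX * (dZ * dA))) (Q : 'M[C]_(dX * dZ)) :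
  CPTP Gamma ->
  choi Gamma \in unitmx ->
  choi (ptr_super Gamma) \in unitmx ->
  superchannel R ->
  R (ptr_super Gamma) = Gamma ->
  (* P = C_Gamma^{1/2} and Q = C_{S(Gamma)}^{1/2} (the PSD square roots) *)
  psd P -> P *m P = choi Gamma ->
  psd Q -> Q *m Q = choi (ptr_super Gamma) ->
  exists (dR : nat), (dA <= dR)%N /\
  exists V : 'M[C]_(dX * (dZ * dA), (dX * dZ) * dR),
    [/\ V *m V ^t* = 1%:M,
        (forall tau : 'M[C]_(dX * dZ),
           choi_super R tau =
           P *m V *m kron (invmx Q *m tau *m invmx Q) (1%:M : 'M[C]_dR)
             *m V ^t* *m P)
      & (super_rank R = dA -> dR = dA /\ V ^t* *m V = 1%:M)].
Proof.
move=> cG uG uS [dM [pre [post [pre_CPTP post_CPTP RE]]]] RS [hP _] PP [hQ _] QQ.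
pose dR := maxn dA (super_rank R).
have [X XX] := psd_factor (psd_choi_choi_super pre_CPTP post_CPTP RE)
  (leq_maxr dA (super_rank R) : (_ <= dR)%N).
have [K KE] := choi_factor_kraus (linmap_choi_super post_CPTP RE) XX.
have uP : P \in unitmx by move: uG; rewrite -PP unitmx_mul => /andP[].
have uQ : Q \in unitmx by move: uS; rewrite -QQ unitmx_mul => /andP[].
have RQQ : choi_super R (Q *m Q) = P *m P.
  by rewrite QQ PP (choi_super_choi RE) ?RS //; apply/linmap_ptr_super; case: cG.
have [V [VV CR_formula]] := kraus_normalize KE hP hQ uP uQ RQQ.
exists dR; split; first exact: leq_maxl.
exists V; split => // rankR.
have dRE : dR = dA by apply/maxn_idPl; rewrite rankR.
by split => //; apply: mulmx1C_eqdim VV; rewrite dRE mulnA.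
Qed.
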